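(* Every $k$-colorable graph of pathwidth at most $p$ is $p(k-1)$-almost equitably $k$-colorable.
   Context: A $k$-coloring is equitable if its $k$ color classes (stable sets) have sizes pairwise differing by at most one. A graph $G$ is $q$-almost equitably $k$-colorable if there is a set $X$ of at most $q$ vertices such that $G\setminus X$ has an equitable $k$-coloring. *)

From mathcomp Require Import all_boot.
Set Implicit Arguments. Unset Strict Implicit. Unset Printing Implicit Defensive.

Section Defs.
Variable T : finType.

Definition simple_graph (e : rel T) : Prop := symmetric e /\ irreflexive e.

Definition proper_on (e : rel T) (V : {set T}) (k : nat) (f : T -> 'I_k) : Prop :=
  forall x y, x \in V -> y \in V -> e x y -> f x != f y.

Definition colorable (e : rel T) (k : nat) : Prop :=
  exists f : T -> 'I_k, proper_on e [set: T] f.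

Definition color_class (V : {set T}) (k : nat) (f : T -> 'I_k) (i : 'I_k) : {set T} :=
  [set x in V | f x == i].

Definition equitable_on (e : rel T) (V : {set T}) (k : nat) (f : T -> 'I_k) : Prop :=
  proper_on e V f /\
  forall i j : 'I_k, #|color_class V f i| <= #|color_class V f j| + 1.

Definition almost_equitably_colorable (e : rel T) (q k : nat) : Prop :=
  exists X : {set T}, #|X| <= q /\
    exists f : T -> 'I_k, equitable_on e (~: X) f.

Definition path_decomposition (e : rel T) (B : seq {set T}) : Prop :=
  [/\ forall x, exists2 b, b \in B & x \in b,
      forall x y, e x y -> exists2 b, b \in B & (x \in b) && (y \in b)
    & forall x i j l, i <= j -> j <= l ->
        x \in nth set0 B i -> x \in nth set0 B l -> x \in nth set0 B j].

Definition pathwidth_le (e : rel T) (p : nat) : Prop :=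
  exists B : seq {set T}, path_decomposition e B /\ forall b, b \in B -> #|b| <= p.+1.

End Defs.

From mathcomp Require Import all_boot perm zify.
Set Implicit Arguments. Unset Strict Implicit. Unset Printing Implicit Defensive.

(* A path decomposition of width p orders the vertices so that at most p
   vertices of each prefix have a neighbour beyond it.  Given a proper
   coloring and two colors a, b, deleting these boundary vertices when colored
   a or b and swapping a and b beyond the prefix keeps the coloring proper; as
   the cut moves one vertex at a time, the class of a goes from size |b| to
   size |a| and never drops by more than one, so every size in between is
   reached at the cost of at most p deleted vertices.  Write n - p(k-1) as
   mk + r.  Fixing the classes one at a time, each too small class is brought
   to its final size m or m+1 by such an exchange with a class that is large
   enough, which exists by counting; after at most k-1 exchanges, trimming the
   remaining classes leaves an equitable coloring of all but p(k-1) vertices. *)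

Section ColorClasses.
Variables (T : finType) (k : nat).
Implicit Types (V W : {set T}) (f : T -> 'I_k).

Lemma mem_color_class V f i x : (x \in color_class V f i) = (x \in V) && (f x == i).
Proof. by rewrite inE. Qed.

Lemma card_color_classes V f : #|V| = \sum_i #|color_class V f i|.
Proof.
rewrite -sum1_card (partition_big f predT) //=.
apply: eq_bigr => i _; rewrite -sum1_card; apply: eq_bigl => x.
by rewrite mem_color_class.
Qed.

Lemma card_color_classesID V f (F : {set 'I_k}) :
  #|V| = \sum_(i in F) #|color_class V f i| + \sum_(i in ~: F) #|color_class V f i|.
Proof.
rewrite (card_color_classes V f) (bigID (mem F)) /=.
by congr (_ + _); apply: eq_bigl => i; rewrite inE.
Qed.

Lemma proper_onS (e : rel T) V W f : W \subset V -> proper_on e V f -> proper_on e W f.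
Proof. by move=> /subsetP sWV fV x y /sWV xV /sWV yV; apply: fV. Qed.

Lemma shrink_color_classes V f (g : 'I_k -> nat) :
  (forall i, g i <= #|color_class V f i|) ->
  exists2 W : {set T}, W \subset V & forall i, #|color_class W f i| = g i.
Proof.
move=> le_g.
pose W : {set T} := [set x in V | x \in take (g (f x)) (enum (color_class V f (f x)))].
exists W; first by apply/subsetP => x; rewrite inE => /andP[].
move=> i; have -> : color_class W f i = [set x in take (g i) (enum (color_class V f i))].
  apply/setP => x; rewrite !inE andbAC; apply/andP/idP => [[/andP[_ /eqP <-] //]|x_i].
  have := mem_take x_i; rewrite mem_enum mem_color_class => /andP[-> /eqP fx].
  by rewrite fx eqxx.
by rewrite cardsE (card_uniqP _) ?take_uniq ?enum_uniq // size_takel -?cardE.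
Qed.

Lemma equitable_on_set0 (e : rel T) f : equitable_on e set0 f.
Proof.
have no_class i : color_class set0 f i = set0 by apply/setP => x; rewrite !inE.
by split=> [x y | i j]; rewrite ?inE // !no_class cards0.
Qed.

End ColorClasses.

Lemma nat_ivt_down (g : nat -> nat) (N v : nat) :
  v <= g 0 -> g N <= v -> (forall t, g t <= (g t.+1).+1) -> exists t, g t = v.
Proof.
move=> g0 gN g_step; elim: N gN => [|N IH] gN.
  by exists 0; apply/eqP; rewrite eqn_leq gN.
case: (leqP (g N) v) => [/IH //|lt_v]; exists N.+1; apply/eqP.
by rewrite eqn_leq gN -ltnS (leq_trans lt_v (g_step N)).
Qed.

Section Layout.
Variables (T : finType) (e : rel T).

Definition separator (ord : T -> nat) (t : nat) : {set T} :=
  [set x | (ord x < t) && [exists y, e x y && (t <= ord y)]].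

Variables (p : nat) (B : seq {set T}).
Hypotheses (decB : path_decomposition e B) (szB : forall b, b \in B -> #|b| <= p.+1).

Let first_bag (x : T) := find (fun b : {set T} => x \in b) B.

Let in_first_bag x : x \in nth set0 B (first_bag x).
Proof.
apply: (nth_find set0 (a := fun b : {set T} => x \in b)); case: decB => cover _ _.
by have [b bB xb] := cover x; apply/hasP; exists b.
Qed.

Let first_bag_min x i : x \in nth set0 B i -> first_bag x <= i.
Proof. by move=> xi; rewrite leqNgt; apply/negP => /(before_find set0); rewrite xi. Qed.

Let first_bag_lt x : first_bag x < size B.
Proof.
rewrite ltnNge; apply/negP => /(nth_default set0) nil_bag.
by have := in_first_bag x; rewrite nil_bag inE.
Qed.

Let layout (x : T) := first_bag x * #|T| + enum_rank x.

Let layout_div x : layout x %/ #|T| = first_bag x.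
Proof. by rewrite divnMDl ?divn_small ?addn0 // (leq_ltn_trans _ (ltn_ord (enum_rank x))). Qed.

Let layout_inj : injective layout.
Proof.
move=> x y eq_xy; apply: enum_rank_inj; apply: val_inj.
have := congr1 (modn^~ #|T|) eq_xy.
by rewrite /layout /= !modnMDl !modn_small.
Qed.

Let card_separator_layout t : #|separator layout t| <= p.
Proof.
case: (set_0Vmem (separator layout t)) => [-> | [x0]]; first by rewrite cards0.
rewrite inE => /andP[_ /existsP[y0 /andP[_ y0t]]].
case: (@arg_minnP _ y0 (fun z => t <= layout z) layout y0t) => w wt w_min.
case: decB => _ edge_bag convex.
pose bw := nth set0 B (first_bag w).
have bwB : bw \in B by apply/mem_nth/first_bag_lt.
(* [w] is the first vertex past the cut; the convexity of bags puts every
   separator vertex in the first bag of [w]. *)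
suff sub : separator layout t \subset bw :\ w.
  by have := subset_leq_card sub; have := szB bwB; rewrite (cardsD1 w bw) in_first_bag; lia.
apply/subsetP => x; rewrite !inE => /andP[xt /existsP[y /andP[exy yt]]].
apply/andP; split.
  by apply/eqP => xw; move: xt; rewrite xw ltnNge wt.
have [b bB /andP[xb yb]] := edge_bag x y exy.
have nth_b : nth set0 B (index b B) = b by apply: nth_index.
have le_xw : first_bag x <= first_bag w.
  by rewrite -!layout_div leq_div2r // ltnW // (leq_trans xt wt).
have le_wb : first_bag w <= index b B.
  apply: (leq_trans _ (first_bag_min (_ : y \in _))); last by rewrite nth_b.
  by rewrite -!layout_div leq_div2r ?w_min.
by apply: (convex x _ _ _ le_xw le_wb); rewrite ?nth_b.
Qed.

Lemma path_decomposition_layout :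
  exists ord : T -> nat, injective ord /\ forall t, #|separator ord t| <= p.
Proof. by exists layout; split; [apply: layout_inj | apply: card_separator_layout]. Qed.

End Layout.

Section Exchange.
Variables (T : finType) (e : rel T) (p k : nat) (ord : T -> nat).
Hypotheses (e_sym : symmetric e) (ord_inj : injective ord)
  (card_sep : forall t, #|separator e ord t| <= p).
Variables (V : {set T}) (f : T -> 'I_k) (a b : 'I_k).
Hypothesis f_proper : proper_on e V f.

Let swap_from t x := if t <= ord x then tperm a b (f x) else f x.
Let kept t := V :\: [set x in separator e ord t | (f x == a) || (f x == b)].

Let kept_sub t : kept t \subset V.
Proof. exact: subsetDl. Qed.

Let card_deleted t : #|V :\: kept t| <= p.
Proof.
apply: leq_trans (card_sep t); apply/subset_leq_card/subsetP => x.
by rewrite !inE negb_and negbK => /andP[/orP[/andP[] // | /negP] ].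
Qed.

Let tperm_eq_fixed (c i : 'I_k) : c != a -> c != b -> (tperm a b i == c) = (i == c).
Proof.
by move=> ca cb; rewrite -{1}(@tpermD _ a b c) ?(inj_eq perm_inj) // eq_sym.
Qed.

Let mem_kept t x :
  (x \in kept t) = (x \in V) && ~~ ((x \in separator e ord t) && ((f x == a) || (f x == b))).
Proof. by rewrite !inE andbC. Qed.

Let swap_from_proper t : proper_on e (kept t) (swap_from t).
Proof.
have kV x : x \in kept t -> x \in V by apply/subsetP.
have across x y : x \in kept t -> y \in kept t -> e x y -> ord x < t <= ord y ->
    swap_from t x != swap_from t y.
  move=> xk yk exy /andP[xt ty].
  have x_sep : x \in separator e ord t.
    by rewrite inE xt; apply/existsP; exists y; rewrite exy ty.
  move: (xk); rewrite mem_kept x_sep /= negb_or => /andP[xV /andP[xa xb]].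
  rewrite /swap_from (ltn_geF xt) ty eq_sym tperm_eq_fixed // eq_sym.
  exact: f_proper (kV y yk) exy.
move=> x y xk yk exy; have [xV yV] := (kV x xk, kV y yk).
case: (ltnP (ord x) t) => xt; case: (ltnP (ord y) t) => yt.
- by rewrite /swap_from (ltn_geF xt) (ltn_geF yt); apply: f_proper.
- by apply: across; rewrite ?xt.
- by rewrite eq_sym; apply: across; rewrite ?yt // e_sym.
- by rewrite /swap_from xt yt (inj_eq perm_inj); apply: f_proper.
Qed.

Let swap_from_other t c :
  c != a -> c != b -> color_class (kept t) (swap_from t) c = color_class V f c.
Proof.
move=> ca cb; apply/setP => x; rewrite !mem_color_class mem_kept.
have -> : (swap_from t x == c) = (f x == c).
  by rewrite /swap_from; case: ifP => // _; apply: tperm_eq_fixed.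
by case: (eqVneq (f x) c) => [->|]; rewrite ?andbF // (negPf ca) (negPf cb) andbF andbT.
Qed.

Let swap_from0 : color_class (kept 0) (swap_from 0) a = color_class V f b.
Proof.
apply/setP => x; rewrite !mem_color_class mem_kept inE ltn0 andbT /swap_from leq0n.
by rewrite -[X in _ == X](tpermR a b) (inj_eq perm_inj).
Qed.

Let t_end := (\max_x ord x).+1.

Let swap_from_end : color_class (kept t_end) (swap_from t_end) a = color_class V f a.
Proof.
have lt_end z : ord z < t_end by rewrite ltnS (leq_bigmax (F := ord)).
have no_sep x : x \notin separator e ord t_end.
  rewrite inE negb_and; apply/orP; right.
  by apply/existsP => -[y /andP[_]]; rewrite (ltn_geF (lt_end y)).
apply/setP => x; rewrite !mem_color_class mem_kept (negPf (no_sep x)) andbT.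
by rewrite /swap_from (ltn_geF (lt_end x)).
Qed.

Let separator_succ t x : ord x != t -> x \in separator e ord t.+1 -> x \in separator e ord t.
Proof.
move=> xt; rewrite !inE ltnS leq_eqVlt (negPf xt) /= => /andP[-> /existsP[y /andP[exy ty]]].
by apply/existsP; exists y; rewrite exy ltnW.
Qed.

Let card_swap_from_succ t :
  #|color_class (kept t) (swap_from t) a| <= #|color_class (kept t.+1) (swap_from t.+1) a|.+1.
Proof.
have sub : color_class (kept t) (swap_from t) a \subset
           color_class (kept t.+1) (swap_from t.+1) a :|: [set x | ord x == t].
  apply/subsetP => x; rewrite in_setU inE; case: (eqVneq (ord x) t) => [_|xt]; rewrite ?orbT //.
  rewrite orbF !mem_color_class !mem_kept.
  have -> : swap_from t.+1 x = swap_from t x by rewrite /swap_from ltn_neqAle eq_sym xt.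
  move=> /andP[/andP[-> x_kept] ->]; rewrite andbT /=.
  by apply: contra x_kept => /andP[/(separator_succ xt) -> ->].
have card_t : #|[set x | ord x == t]| <= 1.
  apply/card_le1_eqP => x y; rewrite !inE => /eqP xt /eqP yt.
  by apply: ord_inj; rewrite xt yt.
rewrite -addn1 (leq_trans (subset_leq_card sub)) //.
by rewrite (leq_trans (leq_card_setU _ _).1) ?leq_add2l.
Qed.

Lemma exchange_colors v : #|color_class V f a| <= v <= #|color_class V f b| ->
  exists (V' : {set T}) (f' : T -> 'I_k),
  [/\ V' \subset V, #|V :\: V'| <= p, proper_on e V' f', #|color_class V' f' a| = v &
      forall c, c != a -> c != b -> color_class V' f' c = color_class V f c].
Proof.
move=> /andP[av vb].
have [t card_t] : exists t, #|color_class (kept t) (swap_from t) a| = v.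
  apply: (@nat_ivt_down _ t_end); [by rewrite swap_from0 | by rewrite swap_from_end |].
  exact: card_swap_from_succ.
exists (kept t), (swap_from t); split; [exact: kept_sub | exact: card_deleted |
  exact: swap_from_proper | exact: card_t | exact: swap_from_other].
Qed.
End Exchange.

Section Balancing.
Variables (T : finType) (e : rel T) (p k m r : nat) (ord : T -> nat).
Hypotheses (e_sym : symmetric e) (ord_inj : injective ord)
  (card_sep : forall t, #|separator e ord t| <= p).
Hypotheses (r_lt_k : r < k) (card_T : #|T| = m * k + r + p * (k - 1)).
Implicit Types (F : {set 'I_k}) (V : {set T}) (f : T -> 'I_k).

(* The color fixed j-th gets a class of size [m + (j < r)], so the classes of
   the fixed colors [F] have total size [quota F]. *)
Definition target (F : {set 'I_k}) := m + (#|F| < r).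
Definition quota (F : {set 'I_k}) := #|F| * m + minn #|F| r.

Lemma quota_setU1 F s : s \notin F -> quota (s |: F) = quota F + target F.
Proof. by move=> sF; rewrite /quota /target cardsU1 sF /= mulnDl mul1n; case: ltnP; lia. Qed.

Lemma quota_target_ge F : m * k + r <= quota F + #|~: F| * target F.
Proof.
have := cardsC F; rewrite card_ord /quota /target.
move: #|F| #|~: F| => f u fu; have mk : m * k = f * m + u * m by rewrite -fu mulnDr !(mulnC m).
by case: ltnP => fr; rewrite ?addn0 ?addn1 ?mulnS mk; lia.
Qed.

Lemma quota_target_lt F : 0 < #|~: F| -> quota F + #|~: F| * target F < m * k + r + #|~: F|.
Proof.
have := cardsC F; rewrite card_ord /quota /target.
move: #|F| #|~: F| => f u fu; have mk : m * k = f * m + u * m by rewrite -fu mulnDr !(mulnC m).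
by case: ltnP => fr; rewrite ?addn0 ?addn1 ?mulnS mk; lia.
Qed.


Lemma target_bounds F : m <= target F <= m.+1.
Proof. by rewrite /target; case: (_ < r); rewrite ?addn0 ?addn1 leqnSn leqnn. Qed.

(* [F] is the set of colors whose class size is already final. *)
Definition balanced V f F :=
  [/\ proper_on e V f, #|~: V| <= p * #|F|,
      {in F, forall i, m <= #|color_class V f i| <= m.+1} &
      \sum_(i in F) #|color_class V f i| = quota F].

Lemma balanced_set0 f : proper_on e [set: T] f -> balanced [set: T] f set0.
Proof.
move=> f_proper; split => //; first by rewrite setCT cards0.
  by move=> i; rewrite inE.
by rewrite big_set0 /quota cards0 min0n.
Qed.

Lemma exists_large_class V f F s : balanced V f F -> s \notin F ->
  exists2 c, c \notin F & target F <= #|color_class V f c|.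
Proof.
case=> _ card_CV _ sumF sF.
have u_gt0 : 0 < #|~: F| by apply/card_gt0P; exists s; rewrite inE.
suff /exists_inP[c] : [exists c in ~: F, target F <= #|color_class V f c|].
  by rewrite inE; exists c.
apply: contraT; rewrite negb_exists_in => /forall_inP small.
have sum_small : \sum_(i in ~: F) #|color_class V f i| + #|~: F| <= #|~: F| * target F.
  rewrite -sum_nat_const -[X in _ + X <= _]sum1_card -big_split /=.
  apply: leq_sum => i /small.
  by rewrite addn1 ltnNge.
have fk : #|F| <= k - 1 by have := cardsC F; rewrite card_ord; lia.
have := leq_mul (leqnn p) fk; have := quota_target_lt u_gt0.
have := card_color_classesID V f F; have := cardsC V; rewrite card_T sumF; lia.
Qed.

Lemma balanced_extend V f F s : balanced V f F -> s \notin F ->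
  #|color_class V f s| < target F -> exists V' f', balanced V' f' (s |: F).
Proof.
move=> bal sF small; have [c cF large] := exists_large_class bal sF.
case: bal => f_proper card_CV fixed sumF.
have [|V' [f' [sub card_del f'_proper card_s other]]] :=
  exchange_colors e_sym ord_inj card_sep f_proper (a := s) (b := c) (v := target F).
  by rewrite (ltnW small) large.
have other_F i : i \in F -> color_class V' f' i = color_class V f i.
  by move=> iF; apply: other; apply: contraTneq iF => ->.
exists V', f'; split => //.
- have := cardsC V; have := cardsC V'; have := cardsID V' V.
  by rewrite (setIidPr sub) cardsU1 sF mulnDr muln1; lia.
- move=> i; rewrite in_setU1 => /predU1P[-> | iF]; first by rewrite card_s target_bounds.
  by rewrite other_F ?fixed.
- rewrite big_setU1 //= card_s quota_setU1 // -sumF addnC.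
  by congr (_ + _); apply: eq_bigr => i /other_F ->.
Qed.

Lemma balanced_saturate V f F : balanced V f F ->
  exists V' f' F', balanced V' f' F' /\
    forall i, i \notin F' -> target F' <= #|color_class V' f' i|.
Proof.
have [n] := ubnP #|~: F|; elim: n V f F => // n IH V f F card_CF bal.
case: (boolP [exists s in ~: F, #|color_class V f s| < target F]) => [/exists_inP[s] | ].
  rewrite inE => sF small; have [V' [f' bal']] := balanced_extend bal sF small.
  apply: IH bal'; have := cardsC F; have := cardsC (s |: F).
  by rewrite cardsU1 sF; lia.
rewrite negb_exists_in => /forall_inP large.
by exists V, f, F; split => // i iF; rewrite leqNgt large ?inE.
Qed.

Lemma saturated_almost_equitable V f F : balanced V f F ->
  (forall i, i \notin F -> target F <= #|color_class V f i|) ->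
  almost_equitably_colorable e (p * (k - 1)) k.
Proof.
case=> f_proper _ fixed sumF large.
pose g i := if i \in F then #|color_class V f i| else target F.
have [|W sub card_W] := @shrink_color_classes _ _ V f g.
  by move=> i; rewrite /g; case: ifPn => // /large.
have g_bounds i : m <= g i <= m.+1.
  by rewrite /g; case: ifPn => [/fixed // | _]; apply: target_bounds.
exists (~: W); split.
  have sum_W : #|W| = quota F + #|~: F| * target F.
    rewrite (card_color_classesID W f F) -sumF -sum_nat_const.
    congr (_ + _); apply: eq_bigr => i; rewrite card_W /g ?inE; first by move=> ->.
    by move=> /negPf ->.
  by have := cardsC W; have := quota_target_ge F; rewrite card_T sum_W; lia.
exists f; rewrite setCK; split; first exact: proper_onS sub f_proper.
by move=> i j; rewrite !card_W; have := g_bounds i; have := g_bounds j; lia.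
Qed.

Lemma layout_almost_equitable f : proper_on e [set: T] f ->
  almost_equitably_colorable e (p * (k - 1)) k.
Proof.
move=> /balanced_set0/balanced_saturate[V [f' [F [bal large]]]].
exact: saturated_almost_equitable bal large.
Qed.
End Balancing.

Theorem theorem4 (T : finType) (e : rel T) (k p : nat) :
  simple_graph e -> colorable e k -> pathwidth_le e p ->
  almost_equitably_colorable e (p * (k - 1)) k.
Proof.
move=> [e_sym _] [f f_proper] [B [decB szB]].
have [ord [ord_inj card_sep]] := path_decomposition_layout decB szB.
case: (leqP #|T| (p * (k - 1))) => [small | large].
  by exists setT; split; [rewrite cardsT | exists f; rewrite setCT; apply: equitable_on_set0].
have k_gt0 : 0 < k.
  have /card_gt0P[x _] : 0 < #|T| by apply: leq_ltn_trans large.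
  exact: leq_ltn_trans (ltn_ord (f x)).
pose n := #|T| - p * (k - 1).
apply: (layout_almost_equitable e_sym ord_inj card_sep (m := n %/ k) (r := n %% k)
          _ _ f_proper).
  by rewrite ltn_pmod.
by rewrite -divn_eq subnK // ltnW.
Qed.
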